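(* For every fixed $0<\beta\leq 1$ there exists a constant $c_\beta$ such that the following holds. For every $0<\alpha<1$ and every dimension $d\geq 1$, if $L=[-1,-\beta]\cup\{\alpha\}$, then $N_L(d)\leq c_\beta\, d$; that is, every $L$-spherical code in $\mathbb{R}^d$ has at most $c_\beta d$ elements.
   Context: For a set $L\subseteq[-1,1]$, an $L$-spherical code in $\mathbb{R}^d$ is a set $P$ of unit vectors in $\mathbb{R}^d$ such that $\langle v,v'\rangle\in L$ for every pair of distinct $v,v'\in P$. $N_L(d)$ denotes the maximum cardinality of an $L$-spherical code in $\mathbb{R}^d$. *)

From HB Require Import structures.
From mathcomp Require Import all_boot all_order all_algebra.
From mathcomp Require Import finmap.
From mathcomp Require Import reals.
Set Implicit Arguments. Unset Strict Implicit. Unset Printing Implicit Defensive.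
Import Order.TTheory GRing.Theory Num.Theory.
Local Open Scope ring_scope.
Local Open Scope fset_scope.

Definition dotp (R : realType) (d : nat) (u v : 'rV[R]_d) : R :=
  \sum_(i < d) u 0 i * v 0 i.

Definition L_set (R : realType) (beta alpha : R) (x : R) : Prop :=
  (-1 <= x /\ x <= - beta) \/ x = alpha.

Definition spherical_code (R : realType) (d : nat) (L : R -> Prop)
    (P : {fset 'rV[R]_d}) : Prop :=
  (forall v, v \in P -> dotp v v = 1) /\
  (forall v w, v \in P -> w \in P -> v != w -> L (dotp v w)).

From HB Require Import structures.
From mathcomp Require Import all_boot all_order all_algebra.
From mathcomp Require Import finmap.
From mathcomp Require Import reals.
From mathcomp Require Import ring lra.
Set Implicit Arguments. Unset Strict Implicit. Unset Printing Implicit Defensive.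
Import Order.TTheory GRing.Theory Num.Theory.
Local Open Scope fset_scope.
Local Open Scope ring_scope.

(* Relax L to L' = (-oo, -beta] U {alpha}.  Two greedy arguments bound an L'-code P:
   if every u in P has at most D neighbours w with <u, w> != alpha, then P contains
   an alpha-equiangular set of size |P| / (D + 1), whose Gram matrix
   alpha J + (1 - alpha) I is positive definite, so |P| <= (D + 1) d; if instead
   every u has at most M neighbours with <u, w> = alpha, then P contains a set of
   size |P| / (M + 1) with pairwise products <= -beta, and such a set has at most
   1 + 1/beta elements because |sum|^2 >= 0.
   When 2 alpha <= beta^2, the first argument applies with D = 2/beta^2, by expanding
   |s + beta |B| u|^2 >= 0 where s is the sum of the set B of non-alpha neighbours
   of u.  Otherwise, the alpha-neighbours of u, projected onto u^perp and
   renormalised, form an L'-code for alpha/(1 + alpha), so the second argument reduces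
   the problem to a smaller alpha; the condition 2 alpha <= beta^2 (1 + j alpha) drops
   from j to j - 1 along this step, so ceil(2/beta^2) steps reach the first case. *)

Lemma sumr_const_seq (V : nmodType) (I : Type) (s : seq I) (x : V) :
  \sum_(i <- s) x = x *+ size s.
Proof. by rewrite big_const_seq count_predT iter_addr_0. Qed.

Section Dotp.
Variables (R : realType) (d : nat).
Implicit Types u v w : 'rV[R]_d.

Lemma dotpC u v : dotp u v = dotp v u.
Proof. by apply: eq_bigr => i _; rewrite mulrC. Qed.

Lemma dotpDl u v w : dotp (u + v) w = dotp u w + dotp v w.
Proof. by rewrite /dotp -big_split; apply: eq_bigr => i _; rewrite mxE mulrDl. Qed.

Lemma dotpZl (a : R) u w : dotp (a *: u) w = a * dotp u w.
Proof. by rewrite /dotp mulr_sumr; apply: eq_bigr => i _; rewrite mxE mulrA. Qed.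

Lemma dotpNl u w : dotp (- u) w = - dotp u w.
Proof. by rewrite -scaleN1r dotpZl mulN1r. Qed.

Lemma dotpBl u v w : dotp (u - v) w = dotp u w - dotp v w.
Proof. by rewrite dotpDl dotpNl. Qed.

Lemma dotpDr u v w : dotp w (u + v) = dotp w u + dotp w v.
Proof. by rewrite dotpC dotpDl !(dotpC w). Qed.

Lemma dotpZr (a : R) u w : dotp w (a *: u) = a * dotp w u.
Proof. by rewrite dotpC dotpZl dotpC. Qed.

Lemma dotpBr u v w : dotp w (u - v) = dotp w u - dotp w v.
Proof. by rewrite dotpC dotpBl !(dotpC w). Qed.

Lemma dotp0l w : dotp 0 w = 0.
Proof. by rewrite -(scale0r 0) dotpZl mul0r. Qed.

Lemma dotp_ge0 u : 0 <= dotp u u.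
Proof. by apply: sumr_ge0 => i _; rewrite -expr2 sqr_ge0. Qed.

Lemma dotp_suml (I : Type) (s : seq I) (P : pred I) (F : I -> 'rV[R]_d) w :
  dotp (\sum_(i <- s | P i) F i) w = \sum_(i <- s | P i) dotp (F i) w.
Proof.
elim: s => [|x s IHs]; first by rewrite !big_nil dotp0l.
by rewrite !big_cons; case: (P x); rewrite ?dotpDl IHs.
Qed.

Lemma dotp_sumr (I : Type) (s : seq I) (P : pred I) (F : I -> 'rV[R]_d) w :
  dotp w (\sum_(i <- s | P i) F i) = \sum_(i <- s | P i) dotp w (F i).
Proof. by rewrite dotpC dotp_suml; apply: eq_bigr => i _; rewrite dotpC. Qed.

End Dotp.

Section SphericalCodes.
Variables (R : realType) (d : nat).
Implicit Types (P Q : {fset 'rV[R]_d}) (L : R -> Prop).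

Lemma spherical_code_weaken L L' P :
  (forall x, L x -> L' x) -> spherical_code L P -> spherical_code L' P.
Proof. by move=> LL' [unitP LP]; split=> // v w vP wP vw; apply/LL'/LP. Qed.

Lemma spherical_code_fsubset L P Q :
  Q `<=` P -> spherical_code L P -> spherical_code L Q.
Proof.
move=> /fsubsetP sQP [unitP LP].
by split=> [v /sQP|v w /sQP vP /sQP wP]; [apply: unitP | apply: LP].
Qed.

Lemma dotp_sum_code_le (c : R) P : spherical_code (fun x => x <= c) P ->
  dotp (\sum_(v <- P) v) (\sum_(v <- P) v) <= #|` P|%:R * (1 + c * (#|` P|%:R - 1)).
Proof.
move=> [unitP leP]; have uP := fset_uniq P.
have row v : v \in P -> \sum_(w <- P) dotp v w <= 1 + c * (#|` P|%:R - 1).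
  move=> vP; rewrite (bigD1_seq v) //= unitP // lerD2l.
  have -> : #|` P|%:R - 1 = (count (predC1 v) P)%:R :> R.
    by rewrite -(count_predC (pred1 v) P) count_uniq_mem // vP natrD addrAC subrr add0r.
  rewrite mulr_natr -iter_addr_0 -big_const_seq.
  rewrite [X in X <= _]big_seq_cond [X in _ <= X]big_seq_cond.
  apply: ler_sum => w /andP[wP wv].
  by apply: leP; rewrite // eq_sym.
rewrite dotp_suml mulr_natl -sumr_const_seq big_seq [X in _ <= X]big_seq.
by apply: ler_sum => v vP; rewrite dotp_sumr row.
Qed.

Lemma card_obtuse_code (beta : R) P : 0 < beta ->
  spherical_code (fun x => x <= - beta) P -> #|` P|%:R <= 1 + beta^-1.
Proof.
move=> b0 codeP; have := le_trans (dotp_ge0 _) (dotp_sum_code_le codeP).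
have bb : beta * beta^-1 = 1 by rewrite mulfV ?gt_eqF.
have bi0 : 0 < beta^-1 by rewrite invr_gt0.
have : 0 <= #|` P|%:R :> R := ler0n _ _.
move: (#|` P|%:R) => n n0 sq0; nra.
Qed.

Lemma dotp_lincomb n (k : 'I_n -> R) (X : 'I_n -> 'rV[R]_d) :
  dotp (\sum_i k i *: X i) (\sum_i k i *: X i) =
  \sum_i \sum_j k i * k j * dotp (X i) (X j).
Proof.
rewrite dotp_suml; apply: eq_bigr => i _; rewrite dotpZl dotp_sumr mulr_sumr.
by apply: eq_bigr => j _; rewrite dotpZr mulrA.
Qed.

Lemma card_equiangular_code (alpha : R) P : 0 <= alpha -> alpha < 1 ->
  spherical_code (fun x => x = alpha) P -> (#|` P| <= d)%N.
Proof.
move=> a0 a1 [unitP angleP]; pose X := in_tuple (P : seq 'rV[R]_d).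
have gram (i j : 'I_#|` P|) : dotp P`_i P`_j = alpha + (1 - alpha) * (i == j)%:R.
  have [<-|ij] := eqVneq i j; first by rewrite unitP ?mem_nth //= mulr1 subrKC.
  by rewrite /= mulr0 addr0 angleP ?mem_nth // nth_uniq ?fset_uniq.
have freeX : free X.
  apply/freeP => k sum0 i.
  have row i' : \sum_j k i' * k j * dotp P`_i' P`_j =
      alpha * k i' * \sum_j k j + (1 - alpha) * k i' ^+ 2.
    under eq_bigr => j _ do rewrite gram mulrDr.
    rewrite big_split /= -mulr_suml -mulr_sumr [X in _ + X = _](bigD1 i') //= eqxx.
    rewrite [X in _ + (_ + X) = _]big1 => [|j ji]; first by rewrite mulr1 addr0; ring.
    by rewrite eq_sym (negbTE ji) !mulr0.
  have sq0 : alpha * (\sum_j k j) ^+ 2 + (1 - alpha) * \sum_j k j ^+ 2 = 0.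
    rewrite -[RHS](@dotp0l R d 0) -sum0 dotp_lincomb (eq_bigr _ (fun i' _ => row i')).
    by rewrite big_split /= -mulr_suml -!mulr_sumr expr2 mulrA.
  have sqk0 : \sum_j k j ^+ 2 = 0.
    apply/eqP; rewrite eq_le sumr_ge0 ?andbT => [|j _]; last exact: sqr_ge0.
    have : 0 <= alpha * (\sum_j k j) ^+ 2 by rewrite mulr_ge0 ?sqr_ge0.
    have : 0 < 1 - alpha by lra.
    nra.
  move/eqP: sqk0; rewrite psumr_eq0 => [/allP/(_ i (mem_index_enum _))|j _].
    by rewrite sqrf_eq0 => /eqP.
  exact: sqr_ge0.
have dimX : \dim <<X>> = #|` P| by rewrite (eqP freeX).
rewrite -dimX; apply: leq_trans (dimvS (subvf _)) _.
by rewrite dimvf /= dim_matrix mul1r.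
Qed.

End SphericalCodes.

Section Greedy.
Variables (T : choiceType) (E : rel T).
Hypothesis symE : symmetric E.

Definition neighbours (P : {fset T}) (u : T) : {fset T} :=
  [fset w in P | (w != u) && E u w].

Lemma greedy_independent (R : realFieldType) (D : R) (P : {fset T}) :
  (forall u, u \in P -> #|` neighbours P u|%:R <= D) ->
  exists2 I : {fset T}, I `<=` P /\ {in I &, forall x y, x != y -> ~~ E x y}
    & #|` P|%:R <= (D + 1) * #|` I|%:R.
Proof.
move=> degP; suff : forall Q, Q `<=` P ->
    exists2 I : {fset T}, I `<=` Q /\ {in I &, forall x y, x != y -> ~~ E x y}
      & #|` Q|%:R <= (D + 1) * #|` I|%:R.
  by move/(_ P (fsubset_refl P)).
move=> Q; have [n] := ubnP #|` Q|; elim: n Q => // n IH Q /ltnSE leQn sQP.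
have [->|/fset0Pn[q qQ]] := eqVneq Q fset0.
  by exists fset0; [split=> [|x]; rewrite ?fsub0set ?inE | rewrite cardfs0 mulr0].
set Q' := [fset w in Q `\ q | ~~ E q w].
have sQ'Qq : Q' `<=` Q `\ q := fset_sub _ _.
have ltQ'Q : (#|` Q'| < #|` Q|)%N.
  exact: leq_ltn_trans (fsubset_leq_card sQ'Qq) (fproper_ltn_card (fproperD1 qQ)).
have sQ'P : Q' `<=` P.
  apply: fsubset_trans sQ'Qq _; exact: fsubset_trans (fsubD1set Q q) sQP.
have [I [sIQ' indI] cardQ'] := IH Q' (leq_trans ltQ'Q leQn) sQ'P.
have qI : q \notin I.
  by apply: contraTN isT => /(fsubsetP sIQ'); rewrite !inE eqxx.
exists (q |` I); [split | ].
- apply/fsubsetP => x; rewrite !inE => /orP[/eqP -> // | /(fsubsetP sIQ')].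
  by rewrite !inE => /andP[/andP[]].
- have nEqI x : x \in I -> ~~ E q x.
    by move/(fsubsetP sIQ'); rewrite !inE => /andP[].
  move=> x y; rewrite !inE => /orP[/eqP -> | xI] /orP[/eqP -> | yI].
  + by rewrite eqxx.
  + by move=> _; apply: nEqI.
  + by move=> _; rewrite symE; apply: nEqI.
  + exact: indI.
- have coverQ : Q `<=` q |` (neighbours P q `|` Q').
    apply/fsubsetP => x xQ; rewrite !inE xQ (fsubsetP sQP) //= andbT.
    by case: eqVneq => //= _; case: (E q x).
  have cardQ : (#|` Q| <= 1 + #|` neighbours P q| + #|` Q'|)%N.
    apply: leq_trans (fsubset_leq_card coverQ) _.
    rewrite cardfsU1 -addnA leq_add ?leq_b1 //; exact: leq_card_fsetU.
  have := degP q (fsubsetP sQP q qQ).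
  move: cardQ; rewrite cardfsU1 qI -(ler_nat R) !natrD => cardQ.
  by move: cardQ'; rewrite mulrDr mulr1; lra.
Qed.

End Greedy.

(* Dropping the bound -1 of [L_set] costs nothing for unit vectors and makes the
   class closed under the projection step [alpha_link_code]. *)
Definition L_ray (R : realType) (beta alpha x : R) : Prop := x <= - beta \/ x = alpha.

Section RayCodes.
Variables (R : realType) (d : nat).
Implicit Types (P Q : {fset 'rV[R]_d}) (beta alpha : R).

Lemma card_nonalpha_neighbours beta alpha P u :
  0 < beta -> 0 <= alpha -> 2 * alpha <= beta ^+ 2 ->
  spherical_code (L_ray beta alpha) P -> u \in P ->
  #|` neighbours [rel x y | dotp x y != alpha] P u|%:R <= 2 / beta ^+ 2.
Proof.
move=> b0 a0 ab [unitP rayP] uP; set B := neighbours _ P u.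
have dotpB w : w \in B -> dotp u w <= - beta.
  rewrite !inE => /and3P[wP wu /= uw].
  by case: (rayP u w uP wP); rewrite 1?eq_sym // => /eqP; rewrite (negbTE uw).
have codeB : spherical_code (fun x => x <= alpha) B.
  apply: spherical_code_weaken (spherical_code_fsubset (fset_sub _ _) (conj unitP rayP)).
  by move=> x [|->] //; lra.
set s := \sum_(v <- B) v; set b : R := #|` B|%:R.
have ss : dotp s s <= b * (1 + alpha * (b - 1)) := dotp_sum_code_le codeB.
have us : dotp u s <= - beta * b.
  rewrite dotp_sumr /b mulr_natr -sumr_const_seq big_seq [X in _ <= X]big_seq.
  exact: ler_sum.
have := dotp_ge0 (s + (beta * b) *: u).
rewrite !dotpDl !dotpDr !dotpZl !dotpZr (unitP u uP) (dotpC s u) => sq0.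
have b0' : 0 <= b := ler0n _ _.
have bus : beta * b * dotp u s <= beta * b * (- beta * b).
  by rewrite ler_wpM2l // mulr_ge0 // ltW.
have abb : 2 * alpha * (b * b) <= beta ^+ 2 * (b * b) by rewrite ler_wpM2r ?mulr_ge0.
have ab0 : 0 <= alpha * b by rewrite mulr_ge0.
rewrite ler_pdivlMr ?exprn_gt0 //.
have [->|bn0] := eqVneq b 0; first lra.
have bpos : 0 < b by rewrite lt0r bn0.
rewrite expr2 in abb *; nra.
Qed.

Lemma alpha_link_code beta alpha P u : 0 <= beta -> 0 <= alpha -> alpha < 1 ->
  spherical_code (L_ray beta alpha) P -> u \in P ->
  exists2 Q : {fset 'rV[R]_d}, spherical_code (L_ray beta (alpha / (1 + alpha))) Q
    & #|` Q| = #|` neighbours [rel x y | dotp x y == alpha] P u|.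
Proof.
move=> b0 a0 a1 [unitP rayP] uP; set W := neighbours _ P u.
have dotpW w : w \in W -> w \in P /\ dotp u w = alpha.
  by rewrite !inE => /and3P[wP _ /eqP].
have a2 : 0 < 1 - alpha ^+ 2 by nra.
pose r := Num.sqrt (1 - alpha ^+ 2)^-1.
have r2 : r ^+ 2 = (1 - alpha ^+ 2)^-1 by rewrite sqr_sqrtr // invr_ge0 ltW.
have r0 : r != 0 by rewrite sqrtr_eq0 -ltNge invr_gt0.
pose f w := r *: (w - alpha *: u).
have dotpf w1 w2 : w1 \in W -> w2 \in W ->
    dotp (f w1) (f w2) = (dotp w1 w2 - alpha ^+ 2) / (1 - alpha ^+ 2).
  move=> /dotpW[_ uw1] /dotpW[_ uw2].
  rewrite /f dotpZl dotpZr !dotpBl !dotpBr !dotpZl !dotpZr (dotpC w1 u) uw1 uw2.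
  by rewrite unitP // mulrA -expr2 r2; field; lra.
have finj : {in W &, injective f} by move=> w1 w2 _ _ /(scalerI r0)/addIr.
exists (f @` W); last by rewrite card_in_imfset.
split=> [_ /imfsetP[w /= wW ->] | _ _ /imfsetP[w1 /= w1W ->] /imfsetP[w2 /= w2W ->] f12].
  by rewrite dotpf // unitP ?(dotpW w wW).1 //; field; lra.
have w12 : w1 != w2 by apply: contraNneq f12 => ->.
have [w1P _] := dotpW w1 w1W; have [w2P _] := dotpW w2 w2W.
rewrite dotpf //; case: (rayP w1 w2 w1P w2P w12) => [le12|->].
  by left; rewrite ler_pdivrMr //; nra.
by right; field; lra.
Qed.

Lemma ray_code_card_small_alpha beta alpha P :
  0 < beta -> 0 <= alpha -> alpha < 1 -> 2 * alpha <= beta ^+ 2 ->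
  spherical_code (L_ray beta alpha) P -> #|` P|%:R <= (2 / beta ^+ 2 + 1) * d%:R.
Proof.
move=> b0 a0 a1 ab codeP.
have symE : symmetric [rel x y : 'rV[R]_d | dotp x y != alpha].
  by move=> x y /=; rewrite dotpC.
have [I [sIP indI] cardP] :=
  greedy_independent symE (fun u => card_nonalpha_neighbours b0 a0 ab codeP (u := u)).
have codeI : spherical_code (fun x => x = alpha) I.
  split=> [v /(fsubsetP sIP) /codeP.1 // | v w vI wI vw].
  by apply/eqP; move: (indI v w vI wI vw); rewrite negbK.
apply: le_trans cardP _; rewrite ler_wpM2l ?ler_nat ?(card_equiangular_code a0 a1 codeI) //.
by rewrite addr_ge0 // divr_ge0 // ltW // exprn_gt0.
Qed.

Fixpoint ray_code_const beta (j : nat) : R :=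
  if j is j'.+1 then (1 + beta^-1) * (ray_code_const beta j' + 1)
  else 2 / beta ^+ 2 + 1.

Lemma ray_code_const_ge0 beta j : 0 < beta -> 0 <= ray_code_const beta j.
Proof.
move=> b0; have bi0 : 0 < beta^-1 by rewrite invr_gt0.
elim: j => [|j IHj] /=; first by rewrite addr_ge0 // divr_ge0 // ltW // exprn_gt0.
by rewrite mulr_ge0 // addr_ge0 // ltW.
Qed.

Lemma ray_code_card_le beta alpha j P : 0 < beta -> (1 <= d)%N ->
  0 < alpha -> alpha < 1 -> 2 * alpha <= beta ^+ 2 * (1 + j%:R * alpha) ->
  spherical_code (L_ray beta alpha) P -> #|` P|%:R <= ray_code_const beta j * d%:R.
Proof.
move=> b0 d1; elim: j alpha P => [|j IHj] alpha P a0 a1 ab codeP /=.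
  by rewrite mul0r addr0 mulr1 in ab; exact: ray_code_card_small_alpha (ltW a0) a1 ab codeP.
have degP u : u \in P ->
    #|` neighbours [rel x y | dotp x y == alpha] P u|%:R <= ray_code_const beta j * d%:R.
  move=> uP; have [Q codeQ <-] := alpha_link_code (ltW b0) (ltW a0) a1 codeP uP.
  apply: IHj codeQ; [by rewrite divr_gt0 //; lra | by rewrite ltr_pdivrMr; lra |].
  rewrite -(ler_pM2r (_ : 0 < 1 + alpha)); last lra.
  have a1' : 1 + alpha != 0 by rewrite gt_eqF //; lra.
  have -> : 2 * (alpha / (1 + alpha)) * (1 + alpha) = 2 * alpha by field.
  have -> : beta ^+ 2 * (1 + j%:R * (alpha / (1 + alpha))) * (1 + alpha) =
      beta ^+ 2 * (1 + j.+1%:R * alpha) by rewrite -natr1; field.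
  exact: ab.
have symE : symmetric [rel x y : 'rV[R]_d | dotp x y == alpha].
  by move=> x y /=; rewrite dotpC.
have [I [sIP indI] cardP] := greedy_independent symE degP.
have codeI : spherical_code (fun x => x <= - beta) I.
  split=> [v /(fsubsetP sIP) /codeP.1 // | v w vI wI vw].
  have [vP wP] := (fsubsetP sIP v vI, fsubsetP sIP w wI).
  case: (codeP.2 v w vP wP vw) => // vwa.
  by move: (indI v w vI wI vw); rewrite /= vwa eqxx.
apply: le_trans cardP _; set c := ray_code_const beta j.
have cd0 : 0 <= c * d%:R + 1 by rewrite addr_ge0 ?mulr_ge0 ?ray_code_const_ge0.
have cdd : c * d%:R + 1 <= (c + 1) * d%:R by rewrite mulrDl mul1r lerD2l ler1n.
apply: le_trans (ler_wpM2l cd0 (card_obtuse_code b0 codeI)) _.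
rewrite mulrC -mulrA ler_wpM2l // ?addr_ge0 // ?invr_ge0 ?ltW //.
Qed.

End RayCodes.

Theorem theorem1 (R : realType) (beta : R) (hb0 : 0 < beta) (hb1 : beta <= 1) :
  exists c : R, forall (alpha : R) (d : nat),
    0 < alpha -> alpha < 1 -> (1 <= d)%N ->
    forall P : {fset 'rV[R]_d},
      spherical_code (L_set beta alpha) P ->
      (#|` P|%:R : R) <= c * d%:R.
Proof.
have b2 : 0 < beta ^+ 2 by rewrite exprn_gt0.
have [J ltJ] : exists J : nat, 2 / beta ^+ 2 < J%:R.
  by exists (Num.Def.archi_bound (2 / beta ^+ 2)); rewrite archi_boundP // divr_ge0 // ltW.
exists (ray_code_const beta J) => alpha d a0 a1 d1 P codeP.
have ab : 2 * alpha <= beta ^+ 2 * (1 + J%:R * alpha).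
  have : 2 <= J%:R * beta ^+ 2 by rewrite -ler_pdivrMr // ltW.
  move/(ler_wpM2r (ltW a0)); rewrite mulrDr mulr1 mulrA; lra.
apply: ray_code_card_le hb0 d1 a0 a1 ab (spherical_code_weaken _ codeP).
by move=> x [[_ xb]|->]; [left|right].
Qed.
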